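(* Let $p\ge3$ be an odd integer, let $k\ge1$, let $U$ be the uniform distribution on the subset $\{0,1\}\subset\mathbb{F}_p$, and let $D$ be a probability distribution on $\mathbb{F}_p^k$ such that $|D(x)-p^{-k}|\le p^{-2k}$ for each $x\in\mathbb{F}_p^k$. Then there exists a probability distribution $E$ on $\mathbb{F}_p^k$ such that $D=U^k+E$.
   Context: $U^k$ is the product distribution on $\mathbb{F}_p^k$ with independent coordinates distributed according to $U$. For distributions $D',D''$ on $\mathbb{F}_p^k$, $D'+D''$ is their convolution: $(D'+D'')(x)=\sum_{y+z=x}D'(y)D''(z)$. Here $\mathbb{F}_p$ denotes $\mathbb{Z}/p\mathbb{Z}$. *)

From HB Require Import structures.
From mathcomp Require Import all_boot all_order all_algebra.
From mathcomp Require Import reals.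
Set Implicit Arguments. Unset Strict Implicit. Unset Printing Implicit Defensive.
Import Order.TTheory GRing.Theory Num.Theory.
Local Open Scope ring_scope.

(* F_p^k, with F_p = Z/pZ represented by 'Z_p (faithful for p >= 2) and
   vectors as row vectors 'rV['Z_p]_k. *)
Notation vecp p k := ('rV['Z_p]_k).

Definition is_distr (R : realType) (T : finType) (D : T -> R) : Prop :=
  (forall x, 0 <= D x) /\ \sum_(x : T) D x = 1.

Definition unif01 (R : realType) (p : nat) (a : 'Z_p) : R :=
  if (a == 0) || (a == 1) then 2^-1 else 0.

Definition unif01_pow (R : realType) (p k : nat) (x : vecp p k) : R :=
  \prod_(i < k) unif01 R (x ord0 i).

(* Convolution (D' + D'')(x) = sum_{y + z = x} D'(y) D''(z). *)
Definition conv (R : realType) (p k : nat) (D1 D2 : vecp p k -> R)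
    (x : vecp p k) : R :=
  \sum_(y : vecp p k) \sum_(z : vecp p k | y + z == x) D1 y * D2 z.

From HB Require Import structures.
From mathcomp Require Import all_boot all_order all_algebra.
From mathcomp Require Import reals.
From mathcomp Require Import zify ring lra.
Import Order.TTheory GRing.Theory Num.Theory.
Local Open Scope ring_scope.

(* With + denoting convolution, the signed function W(x) = prod_i (-1)^x_i,
   each x_i read as an integer in [0, p), is a convolution inverse of U^k:
   for p odd, U + W is the point mass at 0 (coordinatewise,
   ((-1)^b + (-1)^(b-1)) / 2 vanishes unless b = 0).  Hence D = U^k + E for
   E := W + D, which sums to (sum W)(sum D) = 1 and, since sum W = 1 and
   |W| = 1, satisfies E(x) >= p^-k - p^k * p^-2k = 0. *)

Section Convolution.
Context {R : comPzRingType} {G : finZmodType}.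
Implicit Types (f g h : G -> R) (x : G).

Definition fconv f g x : R := \sum_y \sum_(z | y + z == x) f y * g z.

Definition dirac0 x : R := (x == 0)%:R.

Lemma fconvE f g x : fconv f g x = \sum_y f y * g (x - y).
Proof.
apply: eq_bigr => y _; rewrite (big_pred1 (x - y)) // => z /=.
by apply/eqP/eqP => [<-|->]; [rewrite addrC addKr | rewrite addrC subrK].
Qed.

Lemma sum_shift f y : \sum_x f (x - y) = \sum_x f x.
Proof. by rewrite [RHS](reindex_inj (addIr (- y))). Qed.

Lemma eq_fconvl {f1 f2} g : f1 =1 f2 -> fconv f1 g =1 fconv f2 g.
Proof. by move=> eq_f x; rewrite !fconvE; apply: eq_bigr => y _; rewrite eq_f. Qed.

Lemma fconv_dirac0l g x : fconv dirac0 g x = g x.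
Proof.
rewrite fconvE (bigD1 0) //= /dirac0 eqxx mul1r subr0 big1 ?addr0 //.
by move=> y /negbTE ->; rewrite mul0r.
Qed.

Lemma fconvA f g h x : fconv f (fconv g h) x = fconv (fconv f g) h x.
Proof.
rewrite fconvE [RHS]fconvE; under [RHS]eq_bigr do rewrite fconvE mulr_suml.
rewrite exchange_big /=; apply: eq_bigr => y _.
rewrite fconvE mulr_sumr -(sum_shift _ y).
by apply: eq_bigr => z _; rewrite opprB addrA subrK mulrA.
Qed.

Lemma sum_fconv f g : \sum_x fconv f g x = (\sum_x f x) * (\sum_x g x).
Proof.
under eq_bigr do rewrite fconvE.
rewrite exchange_big mulr_suml; apply: eq_bigr => y _.
by rewrite -mulr_sumr (sum_shift g).
Qed.

End Convolution.

Lemma conv_fconv (R : realType) (p k : nat) (f g : vecp p k -> R) :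
  conv f g =1 fconv f g.
Proof. by []. Qed.

Lemma fconv_lbound {R : realFieldType} {G : finZmodType} {w d : G -> R}
    {c e : R} :
  \sum_y w y = 1 -> (forall y, `|w y| <= 1) ->
  (forall y, `|d y - c| <= e) ->
  forall x, c - #|G|%:R * e <= fconv w d x.
Proof.
move=> w1 w_le1 d_near x.
have -> : fconv w d x = c * \sum_y w y + \sum_y w y * (d (x - y) - c).
  rewrite fconvE mulr_sumr -big_split /=.
  by apply: eq_bigr => y _; ring.
rewrite w1 mulr1.
have : `|\sum_y w y * (d (x - y) - c)| <= #|G|%:R * e.
  apply: le_trans (ler_norm_sum _ _ _) _.
  rewrite -sum1_card natr_sum mulr_suml; apply: ler_sum => y _.
  by rewrite normrM; apply: ler_pM; rewrite ?normr_ge0.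
rewrite ler_norml => /andP [? _]; lra.
Qed.

Section RowProducts.
Context {R : comPzRingType} {k : nat}.

Lemma sum_rV_prod {T : finType} (F : 'I_k -> T -> R) :
  \sum_(x : 'rV[T]_k) \prod_i F i (x ord0 i) = \prod_i \sum_a F i a.
Proof.
rewrite bigA_distr_bigA (reindex (fun f : {ffun 'I_k -> T} => \row_i f i)) /=.
  by apply: eq_bigr => f _; apply: eq_bigr => i _; rewrite mxE.
exists (fun x : 'rV[T]_k => [ffun i => x ord0 i]) => [f _|x _].
  by apply/ffunP => i; rewrite ffunE mxE.
by apply/rowP => i; rewrite mxE ffunE.
Qed.

Context {G : finZmodType}.

Definition row_prod (f : G -> R) (x : 'rV[G]_k) : R := \prod_i f (x ord0 i).

Lemma sum_row_prod (f : G -> R) : \sum_x row_prod f x = (\sum_a f a) ^+ k.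
Proof. by rewrite (sum_rV_prod (fun=> f)) prodr_const card_ord. Qed.

Lemma fconv_row_prod (f g : G -> R) (x : 'rV[G]_k) :
  fconv (row_prod f) (row_prod g) x = \prod_i fconv f g (x ord0 i).
Proof.
under [RHS]eq_bigr do rewrite fconvE.
rewrite fconvE -sum_rV_prod; apply: eq_bigr => y _.
by rewrite -big_split; apply: eq_bigr => i _; rewrite !mxE.
Qed.

Lemma row_prod_dirac0 : row_prod (@dirac0 R G) =1 @dirac0 R _.
Proof.
move=> x; rewrite /row_prod /dirac0; have [->|] := eqVneq x 0.
  by apply: big1 => i _; rewrite mxE eqxx.
have [i xi0 _|x0] := pickP (fun i => x ord0 i != 0).
  by rewrite (bigD1 i) //= (negbTE xi0) mul0r.
suff -> : x = 0 by rewrite eqxx.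
by apply/rowP => i; rewrite mxE; apply/eqP/negbFE/x0.
Qed.

End RowProducts.

Section SignInverse.
Context {R : realType} {q : nat}.
Hypothesis p_odd : odd q.+2.

Definition sign_Zp (a : 'Z_(q.+2)) : R := (-1) ^+ a.

Lemma sum_sign_Zp : \sum_a sign_Zp a = 1.
Proof.
suff alt n : \sum_(a < n) ((-1) ^+ a : R) = (odd n)%:R by rewrite alt p_odd.
elim: n => [|n IHn]; first by rewrite big_ord0.
by rewrite big_ord_recr /= IHn -signr_odd; case: (odd n); rewrite /= ?addrN ?add0r.
Qed.

Lemma sign_Zp_sub1 (b : 'Z_(q.+2)) :
  sign_Zp (b - 1) = if b == 0 then 1 else - sign_Zp b.
Proof.
rewrite sub_Zp_1 /sign_Zp /=; have [->|b0] := eqVneq b 0.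
  rewrite add0n modn_small // -signr_odd.
  by move: p_odd => /= /negPf ->.
have [c bE] : exists c, nat_of_ord b = c.+1.
  by exists b.-1; rewrite prednK // lt0n.
rewrite bE addSn /= modnDr modn_small; last by have := ltn_ord b; lia.
by rewrite exprS mulN1r opprK.
Qed.

Lemma fconv_unif01_sign : fconv (unif01 R (p := q.+2)) sign_Zp =1 @dirac0 R _.
Proof.
move=> b; rewrite fconvE (bigD1 0) // (bigD1 1) //= big1 => [|a /andP [a0 a1]].
  rewrite /unif01 /= subr0 sign_Zp_sub1 /dirac0.
  by case: ifP => [/eqP ->|_]; rewrite /sign_Zp /= ?expr0; lra.
by rewrite /unif01 (negbTE a0) (negbTE a1) mul0r.
Qed.

End SignInverse.

Theorem lemma4p1 (R : realType) (p k : nat) (hp3 : (3 <= p)%N)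
    (hpodd : odd p) (hk : (1 <= k)%N) (D : 'rV['Z_p]_k -> R) :
  is_distr D ->
  (forall x : 'rV['Z_p]_k, `|D x - (p%:R ^- k)| <= p%:R ^- (2 * k)) ->
  exists E : 'rV['Z_p]_k -> R,
    is_distr E /\ (forall x, D x = conv (unif01_pow R (k:=k) (p:=p)) E x).
Proof.
case: p hp3 hpodd D => [|[|q]] // _ p_odd D [D_ge0 D_sum1] D_near.
set W : 'rV['Z_q.+2]_k -> R := row_prod sign_Zp.
have W_sum1 : \sum_y W y = 1.
  by rewrite sum_row_prod (sum_sign_Zp p_odd) expr1n.
have W_inv : fconv (unif01_pow R (k := k)) W =1 dirac0.
  move=> x; rewrite fconv_row_prod -row_prod_dirac0.
  by apply: eq_bigr => i _; apply: fconv_unif01_sign p_odd _.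
exists (fconv W D); split; first split.
- move=> x; apply: le_trans (fconv_lbound W_sum1 _ D_near x).
    rewrite card_mx card_ord mul1n natrX mul2n -addnn exprD invfM mulrA.
    by rewrite divff ?mul1r ?subrr // expf_neq0 // pnatr_eq0.
  by move=> y; rewrite normr_prod big1 // => i _; apply: normr_sign.
- by rewrite sum_fconv W_sum1 D_sum1 mulr1.
- by move=> x; rewrite conv_fconv fconvA (eq_fconvl _ W_inv) fconv_dirac0l.
Qed.
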